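(* Consider the network with vertices $s_1,s_2,s_3,t$ and directed edges $(s_3,s_1),(s_3,s_2),(s_1,t),(s_2,t)$, messages $X_1^k,X_2^k,X_3^k$ with all $3k$ components i.i.d. uniform on a finite alphabet $\mathcal{A}$ ($|\mathcal{A}|>1$), and a demand function $f:\mathcal{A}^3\to\mathcal{B}$ applied componentwise. Let $\mathcal{C}_{f,k}$ be a source-network code that computes $f(X_1^k,X_2^k,X_3^k)$ at $t$ with zero error, and let $\mathbf{a}_3\in\mathcal{A}^k$ be a realization of $X_3^k$. Then for $u\in\{1,2\}$, the number of distinct $\mathbf{Z}_u$-labels that must be transmitted on the edge $(s_u,t)$ (i.e. the number of distinct values of $\mathbf{Z}_u$ over all $X_u^k\in\mathcal{A}^k$ with $X_3^k=\mathbf{a}_3$) is at least $V_u(\mathbf{a}_3)\triangleq\prod_{i=1}^k V_u(a_3^{(i)})$. Moreover, if $\mathbf{x}_1\not\equiv^{\mathbf{a}_3}\mathbf{y}_1|_1$, then $\phi_{(s_1,t)}(\mathbf{x}_1,\phi_{(s_3,s_1)}(\mathbf{a}_3))\neq\phi_{(s_1,t)}(\mathbf{y}_1,\phi_{(s_3,s_1)}(\mathbf{a}_3))$, and analogously, if $\mathbf{x}_2\not\equiv^{\mathbf{a}_3}\mathbf{y}_2|_2$, then $\phi_{(s_2,t)}(\mathbf{x}_2,\phi_{(s_3,s_2)}(\mathbf{a}_3))\neq\phi_{(s_2,t)}(\mathbf{y}_2,\phi_{(s_3,s_2)}(\mathbf{a}_3))$.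
   Context: A source-network code $\mathcal{C}_{f,k}$ consists of encoders $\phi_{(s_3,s_1)},\phi_{(s_3,s_2)}:\mathcal{A}^k\to\mathcal{Z}^*$, $\phi_{(s_1,t)},\phi_{(s_2,t)}:\mathcal{A}^k\times\mathcal{Z}^*\to\mathcal{Z}^*$ (where $\mathcal{Z}^*$ is the set of finite sequences over a finite alphabet $\mathcal{Z}$, $|\mathcal{Z}|>1$) and a decoder $\psi_t:\mathcal{Z}^*\times\mathcal{Z}^*\to\mathcal{B}^k$, with $\mathbf{Z}_1=\phi_{(s_1,t)}(X_1^k,\phi_{(s_3,s_1)}(X_3^k))$, $\mathbf{Z}_2=\phi_{(s_2,t)}(X_2^k,\phi_{(s_3,s_2)}(X_3^k))$ and zero error meaning $\Pr\{\psi_t(\mathbf{Z}_1,\mathbf{Z}_2)\ne f(X_1^k,X_2^k,X_3^k)\}=0$. For $a_3\in\mathcal{A}$ and $x,y\in\mathcal{A}$: $x\equiv^{a_3}y|_1$ iff $f(x,z,a_3)=f(y,z,a_3)$ for all $z\in\mathcal{A}$; $x\equiv^{a_3}y|_2$ iff $f(z,x,a_3)=f(z,y,a_3)$ for all $z\in\mathcal{A}$. These are equivalence relations on $\mathcal{A}$, and $V_u(a_3)$ denotes the number of equivalence classes of $\equiv^{a_3}|_u$. For vectors $\mathbf{x}_u,\mathbf{y}_u,\mathbf{a}_3\in\mathcal{A}^k$: $\mathbf{x}_u\equiv^{\mathbf{a}_3}\mathbf{y}_u|_u$ iff $x_u^{(j)}\equiv^{a_3^{(j)}}y_u^{(j)}|_u$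 for all $j=1,\ldots,k$. *)

From mathcomp Require Import all_boot all_order all_algebra.
Set Implicit Arguments. Unset Strict Implicit. Unset Printing Implicit Defensive.

Section Defs.
Variables (A B Z : finType) (k : nat) (f : A -> A -> A -> B).

Definition equiv1 (a3 x y : A) : bool := [forall z, f x z a3 == f y z a3].
Definition equiv2 (a3 x y : A) : bool := [forall z, f z x a3 == f z y a3].

Definition nclasses (r : A -> A -> bool) : nat :=
  #|[set [set y | r x y] | x : A]|.

Definition V1 (a3 : A) : nat := nclasses (equiv1 a3).
Definition V2 (a3 : A) : nat := nclasses (equiv2 a3).

Definition vequiv1 (a3 x y : k.-tuple A) : bool :=
  [forall i, equiv1 (tnth a3 i) (tnth x i) (tnth y i)].
Definition vequiv2 (a3 x y : k.-tuple A) : bool :=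
  [forall i, equiv2 (tnth a3 i) (tnth x i) (tnth y i)].

Definition fvec (x1 x2 x3 : k.-tuple A) : k.-tuple B :=
  [tuple f (tnth x1 i) (tnth x2 i) (tnth x3 i) | i < k].

(* A source-network code C_{f,k}; Z* = seq Z *)
Record code := Code {
  phi31 : k.-tuple A -> seq Z;
  phi32 : k.-tuple A -> seq Z;
  phi1t : k.-tuple A -> seq Z -> seq Z;
  phi2t : k.-tuple A -> seq Z -> seq Z;
  psit  : seq Z -> seq Z -> k.-tuple B }.

Definition Z1 (C : code) (x1 x3 : k.-tuple A) : seq Z := phi1t C x1 (phi31 C x3).
Definition Z2 (C : code) (x2 x3 : k.-tuple A) : seq Z := phi2t C x2 (phi32 C x3).

(* Probability of error when all 3k components are i.i.d. uniform on A:
   (number of error triples) / |A|^(3k) *)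
Definition error_prob (C : code) : rat :=
  (#|[set x : (k.-tuple A * k.-tuple A * k.-tuple A) |
       psit C (Z1 C x.1.1 x.2) (Z2 C x.1.2 x.2) != fvec x.1.1 x.1.2 x.2]|%:R
   / (#|A| ^ (3 * k))%:R)%R.

Definition zero_error (C : code) : Prop := error_prob C = 0%R.

Definition nlabels1 (C : code) (a3 : k.-tuple A) : nat :=
  size (undup [seq Z1 C x a3 | x <- enum {: k.-tuple A}]).
Definition nlabels2 (C : code) (a3 : k.-tuple A) : nat :=
  size (undup [seq Z2 C x a3 | x <- enum {: k.-tuple A}]).

End Defs.

(** Since the code has zero error, [psit] reproduces [f] on every input.  If
    [x] and [y] get the same label on [(s_1, t)] given [a3], then for every
    second source [z] the decoder receives the same pair of labels, so
    [f(x_i, z, a3_i) = f(y_i, z, a3_i)] for all [i] and [z]: equal labels force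
    [x ≡^{a3} y |_1].  The class of [x_i] is determined by the slice
    [z ↦ f(x_i, z, a3_i)], so the tuple of slices of [x] factors through the
    label; as [x] varies this tuple takes all [∏ V1(a3_i)] values, hence there
    are at least that many labels. *)

From mathcomp Require Import all_boot all_order all_algebra.

Set Implicit Arguments.
Unset Strict Implicit.
Unset Printing Implicit Defensive.

Import GRing.Theory Num.Theory.

Lemma size_undup_map_factor (T U L : eqType) (phi : T -> U) (lab : T -> L)
    (s : seq T) :
  (forall x y, lab x = lab y -> phi x = phi y) ->
  size (undup (map phi s)) <= size (undup (map lab s)).
Proof.
move=> phi_lab; elim: s => //= x s IHs.
have [phi_x_s | phi_x_s] := boolP (phi x \in map phi s).
  by case: ifP => // _; rewrite (leq_trans IHs).
have /negPf -> // : lab x \notin map lab s.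
by apply: contra phi_x_s => /mapP [y ys /phi_lab ->]; apply: map_f.
Qed.

Lemma nclasses_kernel (A T : finType) (r : A -> A -> bool) (h : A -> T) :
  (forall x y, r x y = (h x == h y)) -> nclasses r = #|[set h x | x : A]|.
Proof.
move=> rE; rewrite /nclasses.
have -> : [set [set y | r x y] | x : A] =
          [set [set y | h y == t] | t in [set h x | x : A]].
  rewrite -imset_comp; apply: eq_imset => x /=.
  by apply/setP => y; rewrite !inE rE eq_sym.
rewrite card_in_imset // => _ _ /imsetP [x _ ->] /imsetP [y _ ->] /setP hxy.
by apply/eqP; have := hxy x; rewrite !inE eqxx => <-.
Qed.

Lemma prod_card_imset_le_labels (A T : finType) (L : eqType) (k : nat)
    (h : 'I_k -> A -> T) (lab : k.-tuple A -> L) :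
  (forall x y, lab x = lab y -> forall i, h i (tnth x i) = h i (tnth y i)) ->
  \prod_(i < k) #|[set h i a | a : A]| <=
    size (undup [seq lab x | x <- enum {: k.-tuple A}]).
Proof.
move=> lab_h.
pose phi (x : k.-tuple A) : {ffun 'I_k -> T} := [ffun i => h i (tnth x i)].
pose F i := mem [set h i a | a : A].
have -> : \prod_(i < k) #|[set h i a | a : A]| = #|family F|.
  by rewrite card_family foldrE big_map big_enum.
have phi_lab x y : lab x = lab y -> phi x = phi y.
  by move=> /lab_h eq_xy; apply/ffunP => i; rewrite !ffunE eq_xy.
have family_phi : {subset enum (family F) <= undup (map phi (enum {: k.-tuple A}))}.
  move=> g; rewrite mem_enum mem_undup => /familyP g_F.
  have /fin_all_exists [a ha] : forall i, exists a : A, h i a = g i.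
    by move=> i; have /imsetP [a _ ->] := g_F i; exists a.
  apply/mapP; exists [tuple a i | i < k]; first by rewrite mem_enum.
  by apply/ffunP => i; rewrite ffunE tnth_mktuple ha.
rewrite cardE; apply: leq_trans (size_undup_map_factor _ phi_lab).
exact: uniq_leq_size (enum_uniq _) family_phi.
Qed.

Section LabelBounds.

Variables (A B Z : finType) (k : nat) (f : A -> A -> A -> B).

Definition slice1 (a3 x : A) : {ffun A -> B} := [ffun z => f x z a3].
Definition slice2 (a3 x : A) : {ffun A -> B} := [ffun z => f z x a3].

Lemma equiv1E a3 x y : equiv1 f a3 x y = (slice1 a3 x == slice1 a3 y).
Proof.
apply/forallP/eqP => [eq_xy | /ffunP eq_xy z].
  by apply/ffunP => z; rewrite !ffunE; apply/eqP.
by have := eq_xy z; rewrite !ffunE => ->.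
Qed.

Lemma equiv2E a3 x y : equiv2 f a3 x y = (slice2 a3 x == slice2 a3 y).
Proof.
apply/forallP/eqP => [eq_xy | /ffunP eq_xy z].
  by apply/ffunP => z; rewrite !ffunE; apply/eqP.
by have := eq_xy z; rewrite !ffunE => ->.
Qed.

Lemma V1E a3 : V1 f a3 = #|[set slice1 a3 x | x : A]|.
Proof. exact/nclasses_kernel/equiv1E. Qed.

Lemma V2E a3 : V2 f a3 = #|[set slice2 a3 x | x : A]|.
Proof. exact/nclasses_kernel/equiv2E. Qed.

Variable C : code A B Z k.

Lemma zero_error_correct :
  0 < #|A| -> zero_error f C ->
  forall x1 x2 x3, psit C (Z1 C x1 x3) (Z2 C x2 x3) = fvec f x1 x2 x3.
Proof.
move=> A_gt0; rewrite /zero_error /error_prob => /eqP.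
have /negPf A_neq0 : #|A| != 0 by rewrite -lt0n.
rewrite mulf_eq0 invr_eq0 !pnatr_eq0 expn_eq0 A_neq0 orbF cards_eq0.
move=> /eqP no_error x1 x2 x3; apply/eqP; apply: contraT => bad.
by rewrite -(in_set0 ((x1, x2), x3)) -no_error inE.
Qed.

Hypothesis correct :
  forall x1 x2 x3, psit C (Z1 C x1 x3) (Z2 C x2 x3) = fvec f x1 x2 x3.

Lemma Z1_determines_slice1 a3 x y : Z1 C x a3 = Z1 C y a3 ->
  forall i, slice1 (tnth a3 i) (tnth x i) = slice1 (tnth a3 i) (tnth y i).
Proof.
move=> eq_xy i; apply/ffunP => z; rewrite !ffunE.
have := correct x [tuple z | _ < k] a3; rewrite eq_xy correct.
by move=> /(congr1 (fun t => tnth t i)); rewrite !tnth_mktuple.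
Qed.

Lemma Z2_determines_slice2 a3 x y : Z2 C x a3 = Z2 C y a3 ->
  forall i, slice2 (tnth a3 i) (tnth x i) = slice2 (tnth a3 i) (tnth y i).
Proof.
move=> eq_xy i; apply/ffunP => z; rewrite !ffunE.
have := correct [tuple z | _ < k] x a3; rewrite eq_xy correct.
by move=> /(congr1 (fun t => tnth t i)); rewrite !tnth_mktuple.
Qed.

End LabelBounds.

Theorem lemma4 (A B Z : finType) (k : nat) (f : A -> A -> A -> B)
  (hA : 1 < #|A|) (hZ : 1 < #|Z|) (C : code A B Z k)
  (hC : zero_error f C) (a3 : k.-tuple A) :
  [/\ \prod_(i < k) V1 f (tnth a3 i) <= nlabels1 C a3,
      \prod_(i < k) V2 f (tnth a3 i) <= nlabels2 C a3,
      (forall x1 y1 : k.-tuple A, ~~ vequiv1 f a3 x1 y1 ->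
         phi1t C x1 (phi31 C a3) != phi1t C y1 (phi31 C a3)) &
      (forall x2 y2 : k.-tuple A, ~~ vequiv2 f a3 x2 y2 ->
         phi2t C x2 (phi32 C a3) != phi2t C y2 (phi32 C a3))].
Proof.
have correct := zero_error_correct (ltnW hA) hC.
have Z1_slices := Z1_determines_slice1 correct (a3 := a3).
have Z2_slices := Z2_determines_slice2 correct (a3 := a3).
split.
- under eq_bigr do rewrite V1E.
  exact: prod_card_imset_le_labels Z1_slices.
- under eq_bigr do rewrite V2E.
  exact: prod_card_imset_le_labels Z2_slices.
- move=> x y; apply: contraNneq => /Z1_slices eq_xy.
  by apply/forallP => i; rewrite equiv1E eq_xy.
- move=> x y; apply: contraNneq => /Z2_slices eq_xy.
  by apply/forallP => i; rewrite equiv2E eq_xy.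
Qed.
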